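(* In the setting of the context, consider a Case 3 spacetime ($\partial_v r_-<0$). If there exist constants $\alpha\in(0,1)$ and $\varepsilon>0$ such that $$\alpha\frac{dx_+}{dv}+(1-\alpha)\frac{dx_-}{dv}>-\frac{h_c}{2}\alpha(1-\alpha)(1-\varepsilon)(x_+-x_-)^2$$ holds for all $v>v_0$ with $v_0$ sufficiently large, then the spacetime is of Class 2, i.e. some radially outgoing null geodesics emitted from the inner AH never reach the outer AH.
   Context: Spherically symmetric spacetime $ds^2=-f(v,r)A(v,r)^2dv^2+2A(v,r)\,dr\,dv+r^2d\Omega^2$ with $A>0$, $f,A\to1$ as $r\to\infty$, $f(v,0)=1$, $\partial_rf(v,0)=\partial_rA(v,0)=0$; $f(v,\cdot)$ has exactly two zeros $r_+(v)>r_-(v)$ (outer/inner apparent horizons, AHs), $f=F(r-r_+)(r-r_-)$ with $F>0$, and $h=AF>0$. Assumptions: $\partial_v r_+<0$; $r_\pm(v)\to r_c$ as $v\to\infty$; the sign of $\partial_v r_-$ is constant; the $v\to\infty$ limits of $A,F,h$ behave as analytic functions of $r$, so all $\partial_r^n h$ converge as $v\to\infty$; $h_c=\lim_{v\to\infty}h(v,r_c)$. With $x=r-r_c$, $x_\pm=r_\pm-r_c$ and $h$ regarded as a function of $(v,x)$, radially outgoing null geodesics solve $dx/dv=\tfrac12h(v,x)(x-x_+(v))(x-x_-(v))$. Case 3 means $\partial_v r_-<0$. In Case 3, Class 1 means all outgoing null geodesics emitted from the inner AH reach the outer AH; Class 2 means some of them do not. *)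

From Stdlib Require Import Reals.
From Coquelicot Require Import Coquelicot.
Open Scope R_scope.

(* Coordinates: x = r - r_c, x_pm = r_pm - r_c; h is regarded as a function
   of (v, x). *)
Definition outgoing_null_geodesic (h : R -> R -> R) (xp xm : R -> R)
  (v1 : R) (x : R -> R) : Prop :=
  forall v, v1 <= v ->
    is_derive x v (/ 2 * h v (x v) * (x v - xp v) * (x v - xm v)).

Definition emitted_from_inner_AH (xm : R -> R) (v1 : R) (x : R -> R) : Prop :=
  x v1 = xm v1.

Definition reaches_outer_AH (xp : R -> R) (v1 : R) (x : R -> R) : Prop :=
  exists v2, v1 <= v2 /\ x v2 = xp v2.

Definition class2 (h : R -> R -> R) (xp xm : R -> R) : Prop :=
  exists (v1 : R) (x : R -> R),
    outgoing_null_geodesic h xp xm v1 x /\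
    emitted_from_inner_AH xm v1 x /\
    ~ reaches_outer_AH xp v1 x.

From Stdlib Require Import Reals Lra Lia Classical ClassicalEpsilon.
From Coquelicot Require Import Coquelicot.
Open Scope R_scope.
Set Bullet Behavior "Strict Subproofs".

(* Let y = alpha x_+ + (1 - alpha) x_- be the weighted mean of the two horizons.  It lies
   strictly between them, and there the geodesic equation prescribes the slope
   -(h/2) alpha (1 - alpha) (x_+ - x_-)^2.  At late times x_+, x_- and hence y are close to 0,
   where h exceeds h_c (1 - eps), so the hypothesis says that y rises faster than any outgoing
   geodesic through the same point: a geodesic starting below y can never cross it.  The
   geodesic emitted from the inner horizon at a late time therefore stays below y < x_+
   forever.  It is constructed by Picard iteration for the equation with x clipped to [-1, 1];
   the lower barrier -1 shows that the clipping is never active. *)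

Lemma lipschitz_continuous (z : R -> R) (B t : R) :
  (forall u v, Rabs (z u - z v) <= B * Rabs (u - v)) -> continuous z t.
Proof.
  intros Hz. apply continuity_pt_filterlim. intros eps Heps.
  assert (HB : 0 < Rabs B + 1) by (pose proof (Rabs_pos B); lra).
  exists (eps / (Rabs B + 1)). split; [apply Rdiv_lt_0_compat; lra|].
  intros u [_ Hu]. simpl in *. unfold R_dist in *.
  apply Rle_lt_trans with ((Rabs B + 1) * Rabs (u - t)).
  - eapply Rle_trans; [apply Hz|]. apply Rmult_le_compat_r; [apply Rabs_pos|].
    pose proof (Rle_abs B); lra.
  - apply Rmult_lt_reg_r with (/ (Rabs B + 1)); [apply Rinv_0_lt_compat; lra|].
    rewrite Rmult_comm, <- Rmult_assoc, Rinv_l, Rmult_1_l by lra. exact Hu.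
Qed.

Lemma is_derive_continuous (f : R -> R) (x l : R) : is_derive f x l -> continuous f x.
Proof.
  intros Hd. apply (@ex_derive_continuous R_AbsRing R_NormedModule). exists l. exact Hd.
Qed.

Lemma continuous_eps_delta (g : R -> R) (x : R) : continuous g x ->
  forall e, 0 < e -> exists del, 0 < del /\
    forall y, Rabs (y - x) < del -> Rabs (g y - g x) < e.
Proof.
  intros Hc e He. apply continuity_pt_filterlim in Hc.
  destruct (Hc e He) as [del [Hdel H]]. exists del. split; [exact Hdel|].
  intros y Hy. destruct (Req_dec y x) as [->|Hne].
  - unfold Rminus. rewrite Rplus_opp_r, Rabs_R0. exact He.
  - apply H. repeat split; auto.
Qed.

Lemma continuous_comp_joint (G : R -> R -> R) (z : R -> R) (t : R) :
  (forall s u, continuous (fun p : R * R => G (fst p) (snd p)) (s, u)) ->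
  continuous z t -> continuous (fun s => G s (z s)) t.
Proof.
  intros HG Hz. apply (continuous_comp_2 (fun s => s) z G); auto using continuous_id.
Qed.

Lemma RInt_lipschitz (f : R -> R) (B a t t' : R) :
  (forall u v, ex_RInt f u v) -> (forall s, Rabs (f s) <= B) ->
  Rabs (RInt f a t - RInt f a t') <= B * Rabs (t - t').
Proof.
  intros Hex HB.
  assert (E : (RInt f a t : R) = RInt f a t' + RInt f t' t).
  { rewrite <- (RInt_Chasles f a t' t) by auto. reflexivity. }
  assert (E' : @eq R (RInt f a t' + RInt f t' t - RInt f a t') (RInt f t' t)) by ring.
  rewrite E, E', Rmult_comm.
  apply (norm_RInt_le_const_abs f t' t); auto.
  apply (RInt_correct (V := R_CompleteNormedModule)); auto.
Qed.

Lemma abs_RInt_le_RInt (g k : R -> R) (a b : R) :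
  a <= b -> ex_RInt g a b -> ex_RInt k a b ->
  (forall x, a < x < b -> Rabs (g x) <= k x) -> Rabs (RInt g a b) <= RInt k a b.
Proof.
  intros Hab Hg Hk H. apply Rabs_le. split.
  - assert (E : RInt (fun x => - k x) a b = - RInt k a b).
    { apply is_RInt_unique. exact (is_RInt_opp _ _ _ _ (RInt_correct _ _ _ Hk)). }
    assert (RInt (fun x => - k x) a b <= RInt g a b).
    { apply RInt_le; auto using ex_RInt_opp.
      intros x Hx. specialize (H x Hx). apply Rabs_le_between in H. lra. }
    lra.
  - apply RInt_le; auto. intros x Hx. specialize (H x Hx).
    pose proof (Rle_abs (g x)); lra.
Qed.

Lemma is_RInt_exp_affine (c L a t : R) : L <> 0 ->
  is_RInt (fun s => c * exp (2 * L * (s - a))) a t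
          (c * exp (2 * L * (t - a)) / (2 * L) - c / (2 * L)).
Proof.
  intros HL.
  set (F := fun s => c * exp (2 * L * (s - a)) / (2 * L)).
  assert (E : c * exp (2 * L * (t - a)) / (2 * L) - c / (2 * L) = F t - F a).
  { unfold F. replace (a - a) with 0 by ring. rewrite Rmult_0_r, exp_0. field. auto. }
  rewrite E.
  apply (is_RInt_derive (V := R_CompleteNormedModule) F).
  - intros x _. unfold F. auto_derive; [auto|]. unfold Rminus. field. auto.
  - intros x _. apply (@ex_derive_continuous R_AbsRing R_NormedModule). auto_derive. auto.
Qed.

Lemma le_0_of_le_geom (c D : R) : (forall n, c <= D * (/2) ^ n) -> c <= 0.
Proof.
  intros H.
  assert (Hlim : is_lim_seq (fun n => D * (/2) ^ n) (D * 0)).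
  { apply (is_lim_seq_scal_l _ D 0). apply is_lim_seq_geom. rewrite Rabs_right; lra. }
  rewrite Rmult_0_r in Hlim.
  exact (is_lim_seq_le (fun _ => c) _ c 0 H (is_lim_seq_const c) Hlim).
Qed.

Lemma geom_increments_tail (u : nat -> R) (W : R) :
  (forall n, Rabs (u (S n) - u n) <= W * (/2) ^ n) ->
  forall n m, (n <= m)%nat -> Rabs (u m - u n) <= 2 * W * (/2) ^ n.
Proof.
  intros H n m Hnm.
  assert (Hk : forall k, Rabs (u (n + k)%nat - u n) <= 2 * W * ((/2) ^ n - (/2) ^ (n + k))).
  { induction k as [|k IH].
    - rewrite Nat.add_0_r, Rminus_diag, Rminus_diag, Rabs_R0. lra.
    - replace (u (n + S k)%nat - u n)
        with ((u (S (n + k)) - u (n + k)%nat) + (u (n + k)%nat - u n))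
        by (rewrite Nat.add_succ_r; ring).
      eapply Rle_trans; [apply Rabs_triang|].
      specialize (H (n + k)%nat). rewrite Nat.add_succ_r. simpl pow. lra. }
  replace m with (n + (m - n))%nat by lia.
  eapply Rle_trans; [apply Hk|].
  assert (W0 : 0 <= W).
  { specialize (H O). pose proof (Rabs_pos (u 1%nat - u O)). simpl in H. lra. }
  assert (0 <= (/2) ^ (n + (m - n))) by (apply pow_le; lra).
  apply Rmult_le_compat_l; lra.
Qed.

Lemma geom_increments_lim (u : nat -> R) (W : R) :
  (forall n, Rabs (u (S n) - u n) <= W * (/2) ^ n) ->
  forall n, Rabs (real (Lim_seq u) - u n) <= 2 * W * (/2) ^ n.
Proof.
  intros H. pose proof (geom_increments_tail u W H) as Htail.
  assert (Hex : ex_finite_lim_seq u).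
  { apply ex_lim_seq_cauchy_corr. intros eps.
    assert (Hv : is_lim_seq (fun n => 2 * W * (/2) ^ n) 0).
    { rewrite <- (Rmult_0_r (2 * W)). apply (is_lim_seq_scal_l _ (2 * W) 0).
      apply is_lim_seq_geom. rewrite Rabs_right; lra. }
    apply is_lim_seq_spec in Hv. destruct (Hv (pos_div_2 eps)) as [N HN].
    exists N. intros n m Hn Hm.
    specialize (HN N (Nat.le_refl N)). simpl in HN. rewrite Rminus_0_r in HN.
    pose proof (Htail N n Hn). pose proof (Htail N m Hm). pose proof (Rle_abs (2 * W * (/2) ^ N)).
    replace (u n - u m) with ((u n - u N) - (u m - u N)) by ring.
    eapply Rle_lt_trans; [apply Rabs_triang|]. rewrite Rabs_Ropp. lra. }
  pose proof (Lim_seq_correct' u Hex) as Hl. intros n.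
  assert (Hd := is_lim_seq_abs _ _ (is_lim_seq_minus' _ _ _ _ Hl (is_lim_seq_const (u n)))).
  assert (Hle : Rbar_le (Rabs (Lim_seq u - u n)) (2 * W * (/2) ^ n)).
  { apply is_lim_seq_le_loc with (fun m => Rabs (u m - u n)) (fun _ => 2 * W * (/2) ^ n).
    - exists n. intros m Hm. apply Htail. exact Hm.
    - exact Hd.
    - apply is_lim_seq_const. }
  exact Hle.
Qed.

Lemma first_zero (f : R -> R) (a b : R) : a <= b ->
  (forall t, a <= t <= b -> continuous f t) -> 0 < f a -> f b <= 0 ->
  exists m, a < m <= b /\ f m = 0 /\ forall s, a <= s < m -> 0 < f s.
Proof.
  intros Hab Hc Ha Hb.
  set (E := fun s => a <= s <= b /\ forall u, a <= u <= s -> 0 < f u).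
  destruct (completeness E) as [m [Hub Hlub]].
  - exists b. intros s Hs. apply Hs.
  - exists a. split; [lra|]. intros u Hu. replace u with a by lra. exact Ha.
  - assert (Ham : a <= m) by (apply Hub; split; [lra|]; intros u Hu; replace u with a by lra; auto).
    assert (Hmb : m <= b) by (apply Hlub; intros s Hs; apply Hs).
    assert (Hpos : forall s, a <= s < m -> 0 < f s).
    { intros s Hs. apply NNPP. intros Hfs. assert (m <= s); [|lra].
      apply Hlub. intros e [He Hfe]. apply Rnot_lt_le. intros Hse. apply Hfs, Hfe. lra. }
    assert (Hfm_le : f m <= 0).
    { apply Rnot_lt_le. intros Hfm.
      destruct (continuous_eps_delta f m (Hc m ltac:(lra)) (f m) Hfm) as [d [Hd Hnear]].
      assert (Hmb' : m < b) by (destruct Hmb as [|Heq]; [lra | subst; lra]).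
      set (s := Rmin (m + d / 2) b).
      assert (Hs1 : s <= m + d / 2) by apply Rmin_l.
      assert (Hs2 : s <= b) by apply Rmin_r.
      assert (Hms : m < s) by (apply Rmin_glb_lt; lra).
      assert (E s); [|pose proof (Hub s H); lra].
      split; [lra|]. intros u Hu.
      destruct (Rlt_le_dec u m) as [Hum|Hmu]; [apply Hpos; lra|].
      assert (Rabs (u - m) < d) by (rewrite Rabs_right; lra).
      specialize (Hnear u H). apply Rabs_lt_between in Hnear. lra. }
    assert (Ham' : a < m) by (destruct Ham as [|Heq]; [lra | subst; lra]).
    exists m. repeat split; auto. apply Rle_antisym; [exact Hfm_le|].
    apply Rnot_lt_le. intros Hfm.
    destruct (continuous_eps_delta f m (Hc m ltac:(lra)) (- f m)) as [d [Hd Hnear]]; [lra|].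
    set (s := Rmax (m - d / 2) a).
    assert (Hs1 : m - d / 2 <= s) by apply Rmax_l.
    assert (Hs2 : a <= s) by apply Rmax_r.
    assert (Hsm : s < m) by (apply Rmax_lub_lt; lra).
    assert (Rabs (s - m) < d) by (rewrite Rabs_left; lra).
    specialize (Hnear s H). apply Rabs_lt_between in Hnear.
    specialize (Hpos s ltac:(lra)). lra.
Qed.

Lemma is_derive_pos_lt_left (f : R -> R) (m l a : R) :
  is_derive f m l -> 0 < l -> a < m -> exists s, a < s < m /\ f s < f m.
Proof.
  intros Hd Hl Ham. apply is_derive_Reals in Hd.
  destruct (Hd l Hl) as [d Hnear].
  set (k := Rmin (d / 2) ((m - a) / 2)).
  assert (Hk1 : k <= d / 2) by apply Rmin_l.
  assert (Hk2 : k <= (m - a) / 2) by apply Rmin_r.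
  assert (Hk : 0 < k) by (apply Rmin_glb_lt; [pose proof (cond_pos d)|]; lra).
  assert (Habs : Rabs (- k) < d) by (rewrite Rabs_left; lra).
  specialize (Hnear (- k) ltac:(lra) Habs). apply Rabs_lt_between in Hnear.
  exists (m + - k). split; [lra|].
  assert (Hq : 0 < (f (m + - k) - f m) / - k) by lra.
  assert (E : f (m + - k) - f m = - k * ((f (m + - k) - f m) / - k)) by (field; lra).
  nra.
Qed.

Lemma positive_barrier (f df : R -> R) (a : R) :
  (forall t, a <= t -> is_derive f t (df t)) -> 0 < f a ->
  (forall t, a < t -> f t = 0 -> 0 < df t) -> forall t, a <= t -> 0 < f t.
Proof.
  intros Hd Ha Hz t Ht. apply Rnot_le_lt. intros Hft.
  assert (Hc : forall s, a <= s <= t -> continuous f s).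
  { intros s Hs. apply (is_derive_continuous f s (df s)), Hd. lra. }
  destruct (first_zero f a t Ht Hc Ha Hft) as [m [Hm [Hfm Hpos]]].
  destruct (is_derive_pos_lt_left f m (df m) a) as [s [Hs Hfs]].
  - apply Hd. lra.
  - apply Hz; lra.
  - lra.
  - specialize (Hpos s ltac:(lra)). lra.
Qed.

Lemma continuous_bounded_rect (f : R -> R -> R) (a b c d : R) :
  (forall x y, continuous (fun p : R * R => f (fst p) (snd p)) (x, y)) ->
  exists M, forall x y, a <= x <= b -> c <= y <= d -> Rabs (f x y) <= M.
Proof.
  intros Hc.
  set (g := fun p : Compactness.Tn 2 R => f (fst p) (fst (snd p))).
  assert (Hdel : forall p : Compactness.Tn 2 R, exists e : posreal, forall x y,
     Rabs (x - fst p) < e -> Rabs (y - fst (snd p)) < e -> Rabs (f x y - g p) < 1).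
  { intros p. specialize (Hc (fst p) (fst (snd p))).
    apply filterlim_locally with (eps := mkposreal 1 Rlt_0_1) in Hc.
    destruct Hc as [e He]. exists e. intros x y Hx Hy. apply (He (x, y)). split; assumption. }
  destruct (choice _ Hdel) as [delta Hdelta].
  assert (Hfin : forall l, exists M, forall p, List.In p l -> Rabs (g p) <= M).
  { induction l as [|p l [M HM]].
    - exists 0. intros p [].
    - exists (Rmax (Rabs (g p)) M). intros q [<-|Hq].
      + apply Rmax_l.
      + eapply Rle_trans; [apply HM, Hq|apply Rmax_r]. }
  apply NNPP. intros Hn. apply (compactness_list 2 (a, (c, tt)) (b, (d, tt)) delta).
  intros [l Hl]. apply Hn. destruct (Hfin l) as [M HM].
  exists (M + 1). intros x y Hx Hy.
  destruct (Hl (x, (y, tt))) as [[t1 [t2 []]] [Hin [_ [H1 [H2 _]]]]]; [simpl; tauto|].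
  specialize (HM _ Hin). specialize (Hdelta (t1, (t2, tt)) x y H1 H2).
  unfold g in *; simpl in *.
  pose proof (Rabs_triang_inv (f x y) (f t1 t2)). lra.
Qed.

Definition clip (u : R) : R := Rmax (-1) (Rmin 1 u).

Lemma clip_range (u : R) : -1 <= clip u <= 1.
Proof. unfold clip, Rmax, Rmin. repeat destruct Rle_dec; lra. Qed.

Lemma clip_id (u : R) : -1 <= u <= 1 -> clip u = u.
Proof. intros H. unfold clip, Rmax, Rmin. repeat destruct Rle_dec; lra. Qed.

Lemma clip_lipschitz (u w : R) : Rabs (clip u - clip w) <= 1 * Rabs (u - w).
Proof.
  unfold clip, Rmax, Rmin.
  repeat destruct Rle_dec; unfold Rabs; repeat destruct Rcase_abs; lra.
Qed.

Lemma Rmax_lipschitz (a u w : R) : Rabs (Rmax a u - Rmax a w) <= 1 * Rabs (u - w).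
Proof.
  unfold Rmax. repeat destruct Rle_dec; unfold Rabs; repeat destruct Rcase_abs; lra.
Qed.

Section Picard.

Variables (G : R -> R -> R) (a x0 B : R).
Hypothesis G_cont : forall s u, continuous (fun p : R * R => G (fst p) (snd p)) (s, u).
Hypothesis G_bounded : forall s u, Rabs (G s u) <= B.
Hypothesis G_lipschitz : forall T, exists L, 0 < L /\
  forall s u w, a <= s <= T -> Rabs (G s u - G s w) <= L * Rabs (u - w).

Let B_nonneg : 0 <= B.
Proof. pose proof (G_bounded 0 0). pose proof (Rabs_pos (G 0 0)). lra. Qed.

Lemma ex_RInt_field_lipschitz (z : R -> R) (K : R) :
  (forall u v, Rabs (z u - z v) <= K * Rabs (u - v)) ->
  forall u v, ex_RInt (fun s => G s (z s)) u v.
Proof.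
  intros Hz u v. apply (ex_RInt_continuous (V := R_CompleteNormedModule)).
  intros t _. apply continuous_comp_joint; auto. apply (lipschitz_continuous z K). exact Hz.
Qed.

Definition picard (z : R -> R) (t : R) : R := x0 + RInt (fun s => G s (z s)) a t.

Fixpoint picard_iter (n : nat) : R -> R :=
  match n with O => fun _ => x0 | S n => picard (picard_iter n) end.

Definition picard_limit (t : R) : R := real (Lim_seq (fun n => picard_iter n t)).

Lemma picard_lipschitz (z : R -> R) (K : R) :
  (forall u v, Rabs (z u - z v) <= K * Rabs (u - v)) ->
  forall u v, Rabs (picard z u - picard z v) <= B * Rabs (u - v).
Proof.
  intros Hz u v. unfold picard.
  replace (x0 + RInt (fun s => G s (z s)) a u - (x0 + RInt (fun s => G s (z s)) a v))
    with (RInt (fun s => G s (z s)) a u - RInt (fun s => G s (z s)) a v) by ring.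
  apply RInt_lipschitz; auto. apply (ex_RInt_field_lipschitz z K Hz).
Qed.

Lemma picard_iter_lipschitz (n : nat) (u v : R) :
  Rabs (picard_iter n u - picard_iter n v) <= B * Rabs (u - v).
Proof.
  revert u v. induction n as [|n IH]; intros u v; simpl.
  - rewrite Rminus_diag, Rabs_R0. apply Rmult_le_pos; [exact B_nonneg|apply Rabs_pos].
  - exact (picard_lipschitz _ B IH u v).
Qed.

Lemma picard_sub (z w : R -> R) (K t : R) :
  (forall u v, Rabs (z u - z v) <= K * Rabs (u - v)) ->
  (forall u v, Rabs (w u - w v) <= K * Rabs (u - v)) ->
  picard z t - picard w t = RInt (fun s => G s (z s) - G s (w s)) a t.
Proof.
  intros Hz Hw. unfold picard.
  transitivity (RInt (fun s => G s (z s)) a t - RInt (fun s => G s (w s)) a t); [ring|].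
  symmetry. exact (RInt_minus (V := R_CompleteNormedModule) _ _ a t
    (ex_RInt_field_lipschitz z K Hz a t) (ex_RInt_field_lipschitz w K Hw a t)).
Qed.

(* The weight exp (2 L (t - a)) makes each Picard step contract by a factor 1/2. *)
Lemma picard_iter_step (T L : R) : 0 < L ->
  (forall s u w, a <= s <= T -> Rabs (G s u - G s w) <= L * Rabs (u - w)) ->
  forall n t, a <= t <= T ->
    Rabs (picard_iter (S n) t - picard_iter n t)
    <= B / (2 * L) * exp (2 * L * (t - a)) * (/2) ^ n.
Proof.
  intros HL HLip.
  assert (HK : 0 <= B / (2 * L))
    by (apply Rmult_le_pos; [exact B_nonneg|left; apply Rinv_0_lt_compat; lra]).
  pose proof picard_iter_lipschitz as Hlip.
  induction n as [|n IH]; intros t Ht.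
  - simpl. unfold picard.
    assert (E : @eq R (x0 + RInt (fun s => G s x0) a t - x0) (RInt (fun s => G s x0) a t))
      by ring.
    rewrite E.
    eapply Rle_trans.
    { apply abs_RInt_le_const; [lra| |intros; apply G_bounded].
      exact (ex_RInt_field_lipschitz _ B (Hlip O) a t). }
    pose proof (exp_ineq1_le (2 * L * (t - a))).
    replace ((t - a) * B) with (B / (2 * L) * (2 * L * (t - a))) by (field; lra).
    rewrite Rmult_1_r. apply Rmult_le_compat_l; [exact HK|lra].
  - set (c := L * (B / (2 * L)) * (/2) ^ n).
    assert (Hc : 0 <= c) by (unfold c; apply Rmult_le_pos; [nra|apply pow_le; lra]).
    change (Rabs (picard (picard_iter (S n)) t - picard (picard_iter n) t)
      <= B / (2 * L) * exp (2 * L * (t - a)) * (/2) ^ S n).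
    rewrite (picard_sub _ _ B t (Hlip (S n)) (Hlip n)).
    eapply Rle_trans.
    { apply abs_RInt_le_RInt with (k := fun s => c * exp (2 * L * (s - a))).
      - lra.
      - apply (ex_RInt_minus (V := R_CompleteNormedModule));
          apply (ex_RInt_field_lipschitz _ B); apply Hlip.
      - eexists. apply is_RInt_exp_affine. lra.
      - intros s Hs. eapply Rle_trans; [apply HLip; lra|].
        eapply Rle_trans; [apply Rmult_le_compat_l; [lra|apply IH; lra]|].
        unfold c. right. ring. }
    rewrite (is_RInt_unique _ _ _ _ (is_RInt_exp_affine c L a t ltac:(lra))).
    assert (0 <= c / (2 * L)) by (apply Rmult_le_pos; [lra|left; apply Rinv_0_lt_compat; lra]).
    replace (c * exp (2 * L * (t - a)) / (2 * L))
      with (B / (2 * L) * exp (2 * L * (t - a)) * (/2) ^ S n) by (unfold c; simpl; field; lra).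
    lra.
Qed.

Lemma picard_limit_approx (T : R) : a <= T -> exists W, forall s, a <= s <= T ->
  forall n, Rabs (picard_limit s - picard_iter n s) <= 2 * W * (/2) ^ n.
Proof.
  intros HaT. destruct (G_lipschitz T) as [L [HL HLip]].
  assert (HK : 0 <= B / (2 * L))
    by (apply Rmult_le_pos; [exact B_nonneg|left; apply Rinv_0_lt_compat; lra]).
  exists (B / (2 * L) * exp (2 * L * (T - a))). intros s Hs.
  apply (geom_increments_lim (fun n => picard_iter n s)). intros n.
  eapply Rle_trans; [apply (picard_iter_step T L HL HLip n s Hs)|].
  apply Rmult_le_compat_r; [apply pow_le; lra|]. apply Rmult_le_compat_l; [exact HK|].
  destruct (Req_dec s T) as [->|Hne]; [lra|]. left. apply exp_increasing. nra.
Qed.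

Lemma picard_limit_lipschitz (s s' : R) : a <= s -> a <= s' ->
  Rabs (picard_limit s - picard_limit s') <= B * Rabs (s - s').
Proof.
  intros Hs Hs'.
  destruct (picard_limit_approx (Rmax s s')) as [W HW].
  { eapply Rle_trans; [apply Hs|apply Rmax_l]. }
  assert (H1 := HW s (conj Hs (Rmax_l s s'))).
  assert (H2 := HW s' (conj Hs' (Rmax_r s s'))).
  cut (Rabs (picard_limit s - picard_limit s') - B * Rabs (s - s') <= 0); [lra|].
  apply (le_0_of_le_geom _ (4 * W)). intros n.
  specialize (H1 n). specialize (H2 n). pose proof (picard_iter_lipschitz n s s').
  replace (picard_limit s - picard_limit s')
    with ((picard_limit s - picard_iter n s) + (picard_iter n s - picard_iter n s')
          - (picard_limit s' - picard_iter n s')) by ring.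
  pose proof (Rabs_triang
    ((picard_limit s - picard_iter n s) + (picard_iter n s - picard_iter n s'))
                          (- (picard_limit s' - picard_iter n s'))).
  pose proof (Rabs_triang (picard_limit s - picard_iter n s) (picard_iter n s - picard_iter n s')).
  rewrite Rabs_Ropp in *. unfold Rminus in *. lra.
Qed.

Definition picard_solution : R -> R := picard (fun s => picard_limit (Rmax a s)).

Lemma picard_limit_Rmax_lipschitz (u v : R) :
  Rabs (picard_limit (Rmax a u) - picard_limit (Rmax a v)) <= B * Rabs (u - v).
Proof.
  eapply Rle_trans; [apply picard_limit_lipschitz; apply Rmax_l|].
  apply Rmult_le_compat_l; [exact B_nonneg|]. pose proof (Rmax_lipschitz a u v). lra.
Qed.

Lemma picard_solution_eq (t : R) : a <= t -> picard_solution t = picard_limit t.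
Proof.
  intros Ht. destruct (G_lipschitz t) as [L [HL HLip]].
  destruct (picard_limit_approx t Ht) as [W HW].
  assert (HW0 : 0 <= W).
  { specialize (HW t (conj Ht (Rle_refl t)) O). simpl in HW.
    pose proof (Rabs_pos (picard_limit t - x0)). lra. }
  apply Rminus_diag_uniq, Rabs_eq_0, Rle_antisym; [|apply Rabs_pos].
  apply (le_0_of_le_geom _ (W + (t - a) * (L * (2 * W)))). intros n.
  assert (Hstep : Rabs (picard (picard_iter n) t - picard_solution t)
                  <= (t - a) * (L * (2 * W * (/2) ^ n))).
  { unfold picard_solution.
    rewrite (picard_sub _ _ B t (picard_iter_lipschitz n) picard_limit_Rmax_lipschitz).
    apply abs_RInt_le_const; [exact Ht| |].
    - apply (ex_RInt_minus (V := R_CompleteNormedModule));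
        apply (ex_RInt_field_lipschitz _ B);
        [apply picard_iter_lipschitz|apply picard_limit_Rmax_lipschitz].
    - intros s Hs. rewrite Rmax_right by lra. eapply Rle_trans; [apply HLip; lra|].
      apply Rmult_le_compat_l; [lra|]. rewrite Rabs_minus_sym. apply HW. lra. }
  specialize (HW t (conj Ht (Rle_refl t)) (S n)).
  change (picard_iter (S n) t) with (picard (picard_iter n) t) in HW.
  replace (picard_solution t - picard_limit t)
    with (- (picard_limit t - picard (picard_iter n) t)
          - (picard (picard_iter n) t - picard_solution t)) by ring.
  eapply Rle_trans; [apply Rabs_triang|]. rewrite Rabs_Ropp, Rabs_Ropp.
  simpl pow in HW. assert (0 <= (/2) ^ n) by (apply pow_le; lra). nra.
Qed.

Lemma picard_solution_spec :
  picard_solution a = x0 /\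
  forall t, a <= t -> is_derive picard_solution t (G t (picard_solution t)).
Proof.
  split.
  - unfold picard_solution, picard. rewrite RInt_point. change (x0 + 0 = x0). ring.
  - intros t Ht. set (X := fun s => picard_limit (Rmax a s)).
    assert (Hd : is_derive (fun u => RInt (fun s => G s (X s)) a u) t (G t (X t))).
    { apply (is_derive_RInt (V := R_CompleteNormedModule) (fun s => G s (X s)) _ a).
      - apply filter_forall. intros u. apply (RInt_correct (V := R_CompleteNormedModule)).
        exact (ex_RInt_field_lipschitz X B picard_limit_Rmax_lipschitz a u).
      - apply continuous_comp_joint; [exact G_cont|].
        exact (lipschitz_continuous X B t picard_limit_Rmax_lipschitz). }
    pose proof (is_derive_plus (fun _ => x0) _ t zero _ (is_derive_const x0 t) Hd) as Hsum.
    rewrite plus_zero_l in Hsum.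
    replace (picard_solution t) with (X t); [exact Hsum|].
    unfold X. rewrite Rmax_right by exact Ht. symmetry. exact (picard_solution_eq t Ht).
Qed.
End Picard.

Section Trapping.

Variables (h dh : R -> R -> R) (xp xm y dy : R -> R) (v1 H : R).
Hypothesis h_pos : forall v x, 0 < h v x.
Hypothesis h_cont : forall v x, continuous (fun p : R * R => h (fst p) (snd p)) (v, x).
Hypothesis h_derive : forall v x, is_derive (h v) x (dh v x).
Hypothesis dh_cont : forall v x, continuous (fun p : R * R => dh (fst p) (snd p)) (v, x).
Hypothesis xp_cont : forall v, continuous xp v.
Hypothesis xm_cont : forall v, continuous xm v.
Hypothesis y_derive : forall v, is_derive y v (dy v).
Hypothesis y_between_horizons :
  forall v, v1 <= v -> -1 < xm v /\ xm v < y v /\ y v < xp v /\ xp v < 1.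
Hypothesis h_bounded : forall v u, v1 <= v -> -1 <= u <= 1 -> Rabs (h v u) <= H.
Hypothesis y_supersolution :
  forall v, v1 <= v -> / 2 * h v (y v) * (y v - xp v) * (y v - xm v) < dy v.

(* The outgoing null field, frozen before [v1] and clipped to [-1, 1] in [x] so that it is
   bounded and globally Lipschitz. *)
Definition clipped_field (s u : R) : R :=
  / 2 * h (Rmax v1 s) (clip u) * (clip u - xp (Rmax v1 s)) * (clip u - xm (Rmax v1 s)).

Lemma clipped_field_eq (t u : R) : v1 <= t -> -1 <= u <= 1 ->
  clipped_field t u = / 2 * h t u * (u - xp t) * (u - xm t).
Proof.
  intros Ht Hu. unfold clipped_field. rewrite Rmax_right, clip_id by assumption. reflexivity.
Qed.

Lemma clipped_field_cont (s u : R) :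
  continuous (fun p : R * R => clipped_field (fst p) (snd p)) (s, u).
Proof.
  set (tv := fun p : R * R => Rmax v1 (fst p)). set (tx := fun p : R * R => clip (snd p)).
  assert (Htv : continuous tv (s, u)).
  { apply (continuous_comp fst (Rmax v1)); [apply continuous_fst|].
    apply (lipschitz_continuous _ 1), Rmax_lipschitz. }
  assert (Htx : continuous tx (s, u)).
  { apply (continuous_comp snd clip); [apply continuous_snd|].
    apply (lipschitz_continuous _ 1), clip_lipschitz. }
  assert (Hside : forall z : R -> R, (forall v, continuous z v) ->
            continuous (fun p => tx p - z (tv p)) (s, u)).
  { intros z Hz. apply (continuous_minus tx (fun p => z (tv p))); [exact Htx|].
    apply continuous_comp; [exact Htv|apply Hz]. }
  apply (continuous_mult (fun p => / 2 * h (tv p) (tx p) * (tx p - xp (tv p)))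
                         (fun p => tx p - xm (tv p))); [|exact (Hside xm xm_cont)].
  apply (continuous_mult (fun p => / 2 * h (tv p) (tx p)) (fun p => tx p - xp (tv p)));
    [|exact (Hside xp xp_cont)].
  apply (continuous_mult (fun _ => / 2) (fun p => h (tv p) (tx p))); [apply continuous_const|].
  apply (continuous_comp_2 tv tx h); auto.
Qed.

Let H_nonneg : 0 <= H.
Proof.
  assert (Hv1 : v1 <= v1) by lra.
  pose proof (h_bounded v1 0 Hv1 ltac:(lra)). pose proof (Rabs_pos (h v1 0)). lra.
Qed.

Lemma clipped_field_bounded (s u : R) : Rabs (clipped_field s u) <= 2 * H.
Proof.
  unfold clipped_field. set (v := Rmax v1 s).
  pose proof (clip_range u) as Hx. set (x := clip u) in *.
  assert (Hv : v1 <= v) by apply Rmax_l.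
  pose proof (y_between_horizons v Hv). pose proof (h_bounded v x Hv Hx) as Hh.
  assert (H1 : Rabs (x - xp v) <= 2) by (apply Rabs_le; lra).
  assert (H2 : Rabs (x - xm v) <= 2) by (apply Rabs_le; lra).
  rewrite !Rabs_mult, (Rabs_right (/ 2)) by lra.
  assert (Rabs (h v x) * Rabs (x - xp v) <= H * 2)
    by (apply Rmult_le_compat; auto using Rabs_pos).
  assert (Rabs (h v x) * Rabs (x - xp v) * Rabs (x - xm v) <= H * 2 * 2)
    by (apply Rmult_le_compat; auto using Rabs_pos; apply Rmult_le_pos; apply Rabs_pos).
  lra.
Qed.

Lemma h_lipschitz (T : R) : exists D, 0 <= D /\ forall s u w, v1 <= s <= T ->
  -1 <= u <= 1 -> -1 <= w <= 1 -> Rabs (h s u - h s w) <= D * Rabs (u - w).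
Proof.
  destruct (continuous_bounded_rect dh v1 T (-1) 1 dh_cont) as [D HD].
  exists (Rabs D). split; [apply Rabs_pos|]. intros s u w Hs Hu Hw.
  destruct (MVT_abs (h s) (dh s) w u) as [c [Hc Hcwu]].
  { intros c Hc. apply is_derive_Reals, h_derive. }
  rewrite Hc. apply Rmult_le_compat_r; [apply Rabs_pos|].
  eapply Rle_trans; [apply HD|apply Rle_abs]; [exact Hs|].
  pose proof (Rmin_glb w u (-1)). pose proof (Rmax_lub w u 1). lra.
Qed.

Lemma clipped_field_lipschitz (T : R) : exists L, 0 < L /\ forall s u w, v1 <= s <= T ->
  Rabs (clipped_field s u - clipped_field s w) <= L * Rabs (u - w).
Proof.
  destruct (h_lipschitz T) as [D [HD0 HD]].
  exists (2 * D + 2 * H + 1). split; [pose proof H_nonneg; lra|].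
  intros s u w Hs. unfold clipped_field. rewrite Rmax_right by lra.
  pose proof (y_between_horizons s ltac:(lra)).
  pose proof (clip_range u) as Hu. pose proof (clip_range w) as Hw.
  pose proof (clip_lipschitz u w) as Hc.
  set (u' := clip u) in *. set (w' := clip w) in *. set (p := xp s) in *. set (q := xm s) in *.
  pose proof (HD s u' w' Hs Hu Hw) as Hdh.
  pose proof (h_bounded s w' ltac:(lra) Hw) as Hhw.
  replace (/ 2 * h s u' * (u' - p) * (u' - q) - / 2 * h s w' * (w' - p) * (w' - q))
    with (/ 2 * ((h s u' - h s w') * ((u' - p) * (u' - q))
                 + h s w' * ((u' - w') * (u' + w' - p - q)))) by ring.
  rewrite Rabs_mult, (Rabs_right (/ 2)) by lra.
  eapply Rle_trans; [apply Rmult_le_compat_l; [lra|apply Rabs_triang]|].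
  rewrite !Rabs_mult. set (e := Rabs (u' - w')) in *.
  assert (He : 0 <= e) by apply Rabs_pos.
  assert (Hp : Rabs (u' - p) <= 2) by (apply Rabs_le; lra).
  assert (Hq : Rabs (u' - q) <= 2) by (apply Rabs_le; lra).
  assert (Hpq : Rabs (u' + w' - p - q) <= 4) by (apply Rabs_le; lra).
  assert (A1 : Rabs (h s u' - h s w') * (Rabs (u' - p) * Rabs (u' - q)) <= D * e * 4).
  { apply Rmult_le_compat; auto using Rabs_pos.
    - apply Rmult_le_pos; apply Rabs_pos.
    - replace 4 with (2 * 2) by ring. apply Rmult_le_compat; auto using Rabs_pos. }
  assert (A2 : Rabs (h s w') * (e * Rabs (u' + w' - p - q)) <= H * (e * 4)).
  { apply Rmult_le_compat; auto using Rabs_pos.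
    - apply Rmult_le_pos; [exact He|apply Rabs_pos].
    - apply Rmult_le_compat_l; assumption. }
  assert ((2 * D + 2 * H) * e <= (2 * D + 2 * H + 1) * Rabs (u - w))
    by (apply Rmult_le_compat; pose proof H_nonneg; lra).
  lra.
Qed.

Theorem class2_of_supersolution : class2 h xp xm.
Proof.
  destruct (picard_solution_spec clipped_field v1 (xm v1) (2 * H) clipped_field_cont
              clipped_field_bounded clipped_field_lipschitz) as [Hx0 Hx].
  set (x := picard_solution clipped_field v1 (xm v1)) in *.
  assert (Habove : forall t, v1 <= t -> 0 < x t + 1).
  { apply (positive_barrier (fun t => x t + 1) (fun t => clipped_field t (x t))).
    - intros t Ht. pose proof (is_derive_plus x (fun _ => 1) t _ zero (Hx t Ht)
                                 (is_derive_const 1 t)) as Hd.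
      rewrite plus_zero_r in Hd. exact Hd.
    - rewrite Hx0. destruct (y_between_horizons v1 (Rle_refl v1)). lra.
    - intros t Ht Hzero. replace (x t) with (-1) by lra.
      rewrite clipped_field_eq by lra. destruct (y_between_horizons t ltac:(lra)).
      specialize (h_pos t (-1)). assert (0 < (-1 - xp t) * (-1 - xm t)) by nra. nra. }
  assert (Hbelow : forall t, v1 <= t -> 0 < y t - x t).
  { apply (positive_barrier (fun t => y t - x t) (fun t => dy t - clipped_field t (x t))).
    - intros t Ht. exact (is_derive_minus _ _ t _ _ (y_derive t) (Hx t Ht)).
    - rewrite Hx0. destruct (y_between_horizons v1 (Rle_refl v1)). lra.
    - intros t Ht Hzero. replace (x t) with (y t) by lra.
      destruct (y_between_horizons t ltac:(lra)).
      rewrite clipped_field_eq by lra. specialize (y_supersolution t ltac:(lra)). lra. }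
  exists v1, x. split; [|split].
  - intros v Hv. rewrite <- clipped_field_eq; [apply Hx; exact Hv|exact Hv|].
    specialize (Habove v Hv). specialize (Hbelow v Hv). destruct (y_between_horizons v Hv). lra.
  - exact Hx0.
  - intros [v2 [Hv2 Hreach]]. specialize (Hbelow v2 Hv2). destruct (y_between_horizons v2 Hv2). lra.
Qed.

End Trapping.

Lemma is_lim_p_infty_pos_ge0 (f : R -> R) (l : R) :
  (forall v, 0 < f v) -> is_lim f p_infty l -> 0 <= l.
Proof.
  intros Hf Hl.
  apply (is_lim_le_loc (fun _ => 0) f p_infty 0 l); [|apply is_lim_const|exact Hl].
  exists 0. intros v _. left. apply Hf.
Qed.

Definition locally_uniform_lim (h : R -> R -> R) (hinf : R -> R) : Prop :=
  forall K eps, 0 < eps -> exists V, forall v x,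
    V < v -> Rabs x <= K -> Rabs (h v x - hinf x) < eps.

Lemma locally_uniform_lim_pointwise (h : R -> R -> R) (hinf : R -> R) (x : R) :
  locally_uniform_lim h hinf -> is_lim (fun v => h v x) p_infty (hinf x).
Proof.
  intros Hh. apply is_lim_spec. intros eps.
  destruct (Hh (Rabs x) eps (cond_pos eps)) as [V HV].
  exists V. intros v Hv. apply HV; [exact Hv|apply Rle_refl].
Qed.

Lemma locally_uniform_lim_gt (h : R -> R -> R) (hinf : R -> R) (c : R) :
  continuous hinf 0 -> locally_uniform_lim h hinf -> c < hinf 0 ->
  exists del, 0 < del /\
    Rbar_locally p_infty (fun v => forall x, Rabs x < del -> c < h v x).
Proof.
  intros Hc Hh Hlt. set (e := (hinf 0 - c) / 2).
  destruct (continuous_eps_delta hinf 0 Hc e) as [d [Hd Hnear]]; [unfold e; lra|].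
  destruct (Hh 1 e) as [V HV]; [unfold e; lra|].
  exists (Rmin d 1). split; [apply Rmin_glb_lt; lra|].
  exists V. intros v Hv x Hx.
  assert (Hx0 : Rabs (x - 0) < d) by (rewrite Rminus_0_r; pose proof (Rmin_l d 1); lra).
  specialize (HV v x Hv ltac:(pose proof (Rmin_r d 1); lra)).
  specialize (Hnear x Hx0).
  apply Rabs_lt_between in HV. apply Rabs_lt_between in Hnear. unfold e in *. lra.
Qed.

Lemma locally_uniform_lim_bounded (h : R -> R -> R) (hinf : R -> R) (a b : R) :
  (forall x, continuous hinf x) -> locally_uniform_lim h hinf ->
  exists H, Rbar_locally p_infty (fun v => forall u, a <= u <= b -> Rabs (h v u) <= H).
Proof.
  intros Hc Hh.
  destruct (bounded_continuity hinf a b) as [M HM]; [intros x _; apply Hc|].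
  destruct (Hh (Rmax (Rabs a) (Rabs b)) 1 Rlt_0_1) as [V HV].
  exists (M + 1), V. intros v Hv u Hu.
  specialize (HV v u Hv (RmaxAbs a u b (proj1 Hu) (proj2 Hu))).
  specialize (HM u Hu). change (norm (hinf u)) with (Rabs (hinf u)) in HM.
  pose proof (Rabs_triang_inv (h v u) (hinf u)). lra.
Qed.

Lemma is_lim_p_infty_0_abs_lt (f : R -> R) (e : R) :
  is_lim f p_infty 0 -> 0 < e -> Rbar_locally p_infty (fun v => Rabs (f v) < e).
Proof.
  intros Hf He. apply is_lim_spec in Hf. destruct (Hf (mkposreal e He)) as [M HM].
  exists M. intros v Hv. rewrite <- (Rminus_0_r (f v)). exact (HM v Hv).
Qed.

Section LateTime.

Variables (xp xm dxp dxm hinf : R -> R) (h : R -> R -> R) (hc alpha eps v0 : R).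
Hypothesis horizons_ordered : forall v, xm v < xp v.
Hypothesis xp_lim : is_lim xp p_infty 0.
Hypothesis xm_lim : is_lim xm p_infty 0.
Hypothesis h_pos : forall v x, 0 < h v x.
Hypothesis hinf_cont : forall x, continuous hinf x.
Hypothesis h_lim : locally_uniform_lim h hinf.
Hypothesis hc_lim : is_lim (fun v => h v 0) p_infty hc.
Hypothesis alpha_range : 0 < alpha < 1.
Hypothesis eps_pos : 0 < eps.
Hypothesis mean_slope : forall v, v0 < v ->
  alpha * dxp v + (1 - alpha) * dxm v >
    - (hc / 2) * alpha * (1 - alpha) * (1 - eps) * (xp v - xm v) ^ 2.

Definition horizon_mean (v : R) : R := alpha * xp v + (1 - alpha) * xm v.

Lemma h_gt_near_rc : exists del, 0 < del /\
  Rbar_locally p_infty (fun v => forall x, Rabs x < del -> hc * (1 - eps) < h v x).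
Proof.
  destruct (is_lim_p_infty_pos_ge0 _ _ (fun v => h_pos v 0) hc_lim) as [Hpos|<-].
  - apply (locally_uniform_lim_gt h hinf); [apply hinf_cont|exact h_lim|].
    assert (E : Finite (hinf 0) = Finite hc).
    { rewrite <- (is_lim_unique _ _ _ hc_lim).
      exact (eq_sym (is_lim_unique _ _ _ (locally_uniform_lim_pointwise h hinf 0 h_lim))). }
    injection E as ->. nra.
  - exists 1. split; [lra|]. exists 0. intros v _ x _. rewrite Rmult_0_l. apply h_pos.
Qed.

Lemma horizon_mean_late : exists v1 H,
  (forall v, v1 <= v ->
     -1 < xm v /\ xm v < horizon_mean v /\ horizon_mean v < xp v /\ xp v < 1) /\
  (forall v u, v1 <= v -> -1 <= u <= 1 -> Rabs (h v u) <= H) /\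
  (forall v, v1 <= v ->
     / 2 * h v (horizon_mean v) * (horizon_mean v - xp v) * (horizon_mean v - xm v)
     < alpha * dxp v + (1 - alpha) * dxm v).
Proof.
  destruct h_gt_near_rc as [del [Hdel Hgt]].
  destruct (locally_uniform_lim_bounded h hinf (-1) 1 hinf_cont h_lim) as [H Hbnd].
  set (e := Rmin del 1).
  assert (He : 0 < e) by (apply Rmin_glb_lt; lra).
  assert (Hed : e <= del) by apply Rmin_l.
  assert (He1 : e <= 1) by apply Rmin_r.
  assert (Hlate_v0 : Rbar_locally p_infty (fun v => v0 < v)) by (exists v0; auto).
  pose proof (is_lim_p_infty_0_abs_lt xp e xp_lim He) as Hxp.
  pose proof (is_lim_p_infty_0_abs_lt xm e xm_lim He) as Hxm.
  destruct (filter_and _ _ (filter_and _ _ Hxp Hxm)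
                           (filter_and _ _ Hgt (filter_and _ _ Hbnd Hlate_v0))) as [M HM].
  exists (M + 1), H.
  assert (Hlate : forall v, M + 1 <= v ->
    (-e < xp v < e /\ -e < xm v < e) /\ (forall x, Rabs x < del -> hc * (1 - eps) < h v x) /\
    (forall u, -1 <= u <= 1 -> Rabs (h v u) <= H) /\ v0 < v).
  { intros v Hv. destruct (HM v ltac:(lra)) as [[Hp Hm] Hrest].
    apply Rabs_lt_between in Hp. apply Rabs_lt_between in Hm. auto. }
  assert (Hbetween : forall v, M + 1 <= v ->
     -1 < xm v /\ xm v < horizon_mean v /\ horizon_mean v < xp v /\ xp v < 1).
  { intros v Hv. destruct (Hlate v Hv) as [[Hp Hm] _].
    pose proof (horizons_ordered v). unfold horizon_mean. repeat split; nra. }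
  split; [exact Hbetween|split].
  - intros v u Hv Hu. apply (Hlate v Hv). exact Hu.
  - intros v Hv. destruct (Hlate v Hv) as [[Hp Hm] [Hh [_ Hv0]]].
    pose proof (horizons_ordered v).
    assert (Hk : 0 < alpha * (1 - alpha) * (xp v - xm v) ^ 2)
      by (apply Rmult_lt_0_compat; [nra|apply pow_lt; lra]).
    assert (Hy : hc * (1 - eps) < h v (horizon_mean v)).
    { apply Hh. apply Rabs_lt_between. unfold horizon_mean. nra. }
    specialize (mean_slope v Hv0).
    replace (/ 2 * h v (horizon_mean v) * (horizon_mean v - xp v) * (horizon_mean v - xm v))
      with (- (/ 2) * h v (horizon_mean v) * (alpha * (1 - alpha) * (xp v - xm v) ^ 2))
      by (unfold horizon_mean; ring).
    nra.
Qed.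

End LateTime.

Theorem proposition7
  (rc : R) (xp xm dxp dxm : R -> R) (h dh : R -> R -> R) (hinf : R -> R) (hc : R)
  (* apparent horizons r_+ = rc + xp > r_- = rc + xm > 0, differentiable in v *)
  (Horder : forall v, 0 < rc + xm v /\ xm v < xp v)
  (Hdxp : forall v, is_derive xp v (dxp v))
  (Hdxm : forall v, is_derive xm v (dxm v))
  (* d r_+/dv < 0, and Case 3: d r_-/dv < 0 *)
  (Hdxp_neg : forall v, dxp v < 0)
  (Hdxm_neg : forall v, dxm v < 0)
  (* r_pm -> r_c as v -> oo *)
  (Hxp_lim : is_lim xp p_infty 0)
  (Hxm_lim : is_lim xm p_infty 0)
  (* h = A F > 0, jointly continuous, with jointly continuous d h / d x *)
  (Hh_pos : forall v x, 0 < h v x)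
  (Hh_cont : forall v x, continuous (fun p : R * R => h (fst p) (snd p)) (v, x))
  (Hdh : forall v x, is_derive (h v) x (dh v x))
  (Hdh_cont : forall v x, continuous (fun p : R * R => dh (fst p) (snd p)) (v, x))
  (* the v -> oo limit of h is a continuous function of x, attained
     locally uniformly in x *)
  (Hhinf_cont : forall x, continuous hinf x)
  (Hh_lim : forall K eps, 0 < eps -> exists V, forall v x,
       V < v -> Rabs x <= K -> Rabs (h v x - hinf x) < eps)
  (* h_c = lim_{v -> oo} h(v, r_c) *)
  (Hhc : is_lim (fun v => h v 0) p_infty hc)
  (* the hypothesis of the proposition *)
  (alpha eps v0 : R)
  (Halpha : 0 < alpha < 1)
  (Heps : 0 < eps)
  (Hineq : forall v, v0 < v ->
     alpha * dxp v + (1 - alpha) * dxm v >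
       - (hc / 2) * alpha * (1 - alpha) * (1 - eps) * (xp v - xm v) ^ 2) :
  class2 h xp xm.
Proof.
  destruct (horizon_mean_late xp xm dxp dxm hinf h hc alpha eps v0 (fun v => proj2 (Horder v))
              Hxp_lim Hxm_lim Hh_pos Hhinf_cont Hh_lim Hhc Halpha Heps Hineq)
    as [v1 [H [Hbetween [Hbound Hsuper]]]].
  assert (Hmean : forall v, is_derive (horizon_mean xp xm alpha) v
                                      (alpha * dxp v + (1 - alpha) * dxm v)).
  { intros v. exact (is_derive_plus _ _ v _ _ (is_derive_scal _ v alpha _ (Hdxp v))
                                              (is_derive_scal _ v (1 - alpha) _ (Hdxm v))). }
  exact (class2_of_supersolution h dh xp xm _ _ v1 H Hh_pos Hh_cont Hdh Hdh_cont
           (fun v => is_derive_continuous xp v _ (Hdxp v))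
           (fun v => is_derive_continuous xm v _ (Hdxm v)) Hmean Hbetween Hbound Hsuper).
Qed.
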